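(* For every positive integer $l$ there exists a graph of order $2l$ and size $(l+2)(l+1)/2-2$ that admits a regular distance $l$-labeling of degree $2$.
   Context: All graphs are finite and simple; $d(u,v)$ denotes the usual graph distance; order means number of vertices and size means number of edges. For integers $m\le n$, $[m,n]=\{m,m+1,\ldots,n\}$. For a graph $G$ and a positive integer $l$, a distance $l$-labeling of $G$ is a function $f:V(G)\to[0,l]$ such that (i) $f(V(G))=[0,l]$ or $f(V(G))=[1,l]$, and (ii) whenever two distinct vertices $u,v$ satisfy $f(u)=f(v)=k$, we have $d(u,v)=k$. A distance $l$-labeling is regular of degree $r$ if for every $k\in[1,l]$ there are exactly $r$ vertices labeled $k$. *)

From mathcomp Require Import all_boot.
Set Implicit Arguments. Unset Strict Implicit. Unset Printing Implicit Defensive.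

Definition simple_graph (T : finType) (e : rel T) : Prop :=
  symmetric e /\ irreflexive e.

Definition graph_size (n : nat) (e : rel 'I_n) : nat :=
  #|[set p : 'I_n * 'I_n | e p.1 p.2 && (p.1 < p.2)]|.

Definition walk_len (T : finType) (e : rel T) (u v : T) (k : nat) : Prop :=
  exists p : seq T, [/\ size p = k, path e u p & last u p = v].

Definition dist_is (T : finType) (e : rel T) (u v : T) (k : nat) : Prop :=
  walk_len e u v k /\ (forall j, j < k -> ~ walk_len e u v j).

Definition distance_labeling (T : finType) (e : rel T) (l : nat) (f : T -> nat) : Prop :=
  ((forall k, (exists x, f x = k) <-> k <= l) \/
   (forall k, (exists x, f x = k) <-> 1 <= k <= l)) /\
  (forall u v, u != v -> f u = f v -> dist_is e u v (f u)).

Definition regular_distance_labeling (T : finType) (e : rel T) (l r : nat)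
    (f : T -> nat) : Prop :=
  distance_labeling e l f /\
  (forall k, 1 <= k <= l -> #|[set x | f x == k]| = r).

From mathcomp Require Import all_boot.
From mathcomp Require Import zify.

Set Implicit Arguments.
Unset Strict Implicit.
Unset Printing Implicit Defensive.

(* The graph is the lollipop on 2l vertices: a clique on 0, ..., l followed by
   the path l, l+1, ..., 2l-1, so it has 'C(l+1, 2) + (l-1) edges. Label the
   clique vertex i < l by i+1 and the path vertex l+i by i+1. The two vertices
   labelled k are joined by the walk k-1, l, l+1, ..., l+k-1 of length k, and
   no shorter walk exists because x |-> x+1-l (truncated) grows by at most one
   along each edge, and it is 0 at k-1 and k at l+k-1. *)

Section Walks.
Variables (T : finType) (e : rel T).

Lemma walk_len_edge u v : e u v -> walk_len e u v 1.
Proof. by move=> euv; exists [:: v]; rewrite /= euv. Qed.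

Lemma walk_len_rcons u v w k : walk_len e u v k -> e v w -> walk_len e u w k.+1.
Proof.
move=> [p [<- pathp <-]] evw; exists (rcons p w).
by rewrite size_rcons rcons_path pathp evw last_rcons.
Qed.

Section Symmetric.
Hypothesis e_sym : symmetric e.

Lemma walk_len_sym u v k : walk_len e u v k -> walk_len e v u k.
Proof.
move=> [p [<- pathp <-]]; exists (rev (belast u p)); split.
- by rewrite size_rev size_belast.
- by rewrite rev_path; apply: sub_path pathp => x y; rewrite e_sym.
- by case: p {pathp} => [|y q] //=; rewrite rev_cons last_rcons.
Qed.

Lemma dist_is_sym u v k : dist_is e u v k -> dist_is e v u k.
Proof.
move=> [walk_uv shortest]; split; first exact: walk_len_sym.
by move=> j ltjk /walk_len_sym; apply: shortest.
Qed.

End Symmetric.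

Section Lipschitz.
Variable h : T -> nat.
Hypothesis h_lipschitz : forall x y, e x y -> h y <= (h x).+1.

Lemma walk_len_lipschitz u v k : walk_len e u v k -> h v <= h u + k.
Proof.
move=> [p [<- + <-]]; elim: p u => [|y p IHp] u /=; first by rewrite addn0.
by move=> /andP[/h_lipschitz le_hy /IHp]; lia.
Qed.

Lemma dist_is_lipschitz u v k :
  walk_len e u v k -> h u + k <= h v -> dist_is e u v k.
Proof.
move=> walk_uv le_hv; split=> // j ltjk /walk_len_lipschitz; lia.
Qed.

End Lipschitz.
End Walks.

Lemma graph_size_lower_degrees n (e : rel 'I_n) :
  graph_size e = \sum_(j < n) \sum_(i < n) (e i j && (i < j)).
Proof.
rewrite /graph_size -sum1_card big_mkcond /= exchange_big pair_big /=.
by apply: eq_bigr => -[i j] _; rewrite inE; case: ifP.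
Qed.

Section Lollipop.
Variable l : nat.

Definition lollipop_edge : rel nat := fun i j =>
  ((maxn i j <= l) && (i != j)) || ((l <= minn i j) && ((i.+1 == j) || (j.+1 == i))).

Definition lollipop : rel 'I_(2 * l) := fun i j => lollipop_edge i j.

Definition lollipop_label (i : 'I_(2 * l)) : nat :=
  if i < l then i.+1 else i.+1 - l.

Lemma lollipop_simple : simple_graph lollipop.
Proof.
split=> [i j|i]; rewrite /lollipop /lollipop_edge; last lia.
by rewrite maxnC minnC eq_sym [(i.+1 == j) || _]orbC.
Qed.

Lemma lollipop_edge_lower i j :
  lollipop_edge i j && (i < j) = if j <= l then i < j else i.+1 == j.
Proof. by rewrite /lollipop_edge; case: ifP; lia. Qed.

Lemma lollipop_lower_degree (j : 'I_(2 * l)) :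
  \sum_(i < 2 * l) (lollipop i j && (i < j)) = if j <= l then val j else 1.
Proof.
rewrite /lollipop; under eq_bigr => i _ do rewrite lollipop_edge_lower.
case: ifP => le_jl.
  rewrite -big_mkcond /= big_ord_narrow ?(ltnW (ltn_ord j)) //.
  by rewrite sum1_card card_ord.
have lt_j1 : j.-1 < 2 * l by have := ltn_ord j; lia.
have pred_j (i : 'I_(2 * l)) : (i.+1 == j) = (i == Ordinal lt_j1).
  by rewrite -val_eqE /=; lia.
under eq_bigr => i _ do rewrite pred_j.
by rewrite -big_mkcond big_pred1_eq.
Qed.

Lemma lollipop_size : 0 < l -> graph_size lollipop = 'C(l.+1, 2) + l.-1.
Proof.
move=> l_gt0; rewrite graph_size_lower_degrees.
under eq_bigr => j _ do rewrite lollipop_lower_degree.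
rewrite -(big_mkord xpredT (fun j => if j <= l then j else 1)).
rewrite (big_cat_nat _ (n := l.+1)) //=; last lia.
rewrite -bin2_sum (@eq_big_nat _ _ _ l.+1 (2 * l) _ (fun=> 1)); last first.
  by move=> j /andP[lt_lj _]; rewrite leqNgt lt_lj.
rewrite (@eq_big_nat _ _ _ 0 l.+1 _ id) ?sum_nat_const_nat ?muln1; first lia.
by move=> j /andP[_ lt_jl1]; rewrite -ltnS lt_jl1.
Qed.

Lemma lollipop_lipschitz (x y : 'I_(2 * l)) :
  lollipop x y -> y.+1 - l <= (x.+1 - l).+1.
Proof. by rewrite /lollipop /lollipop_edge; lia. Qed.

Lemma lollipop_walk (a b : 'I_(2 * l)) j :
  a < l -> j < l -> b = l + j :> nat -> walk_len lollipop a b j.+1.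
Proof.
move=> lt_al; elim: j b => [|j IHj] b lt_jl b_eq.
  by apply: walk_len_edge; rewrite /lollipop /lollipop_edge b_eq; lia.
have lt_lj : l + j < 2 * l by lia.
apply: (walk_len_rcons (v := Ordinal lt_lj)); first exact: IHj (ltnW lt_jl) _.
by rewrite /lollipop /lollipop_edge /= b_eq; lia.
Qed.

Lemma lollipop_dist (a b : 'I_(2 * l)) :
  a < l -> b = l + a :> nat -> dist_is lollipop a b a.+1.
Proof.
move=> lt_al b_eq.
apply: (dist_is_lipschitz (h := fun x : 'I_(2 * l) => x.+1 - l) lollipop_lipschitz).
  exact: lollipop_walk.
by rewrite b_eq; lia.
Qed.

Lemma lollipop_label_eq (u v : 'I_(2 * l)) :
  u != v -> lollipop_label u = lollipop_label v ->
  (u < l /\ v = l + u :> nat) \/ (v < l /\ u = l + v :> nat).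
Proof.
rewrite -val_eqE /lollipop_label /=; have := ltn_ord u; have := ltn_ord v.
by case: ifP; case: ifP; lia.
Qed.

Lemma lollipop_label_dist (u v : 'I_(2 * l)) :
  u != v -> lollipop_label u = lollipop_label v ->
  dist_is lollipop u v (lollipop_label u).
Proof.
move=> neq_uv /[dup] eq_label /(lollipop_label_eq neq_uv).
case=> [[lt_ul v_eq]|[lt_vl u_eq]].
  by rewrite /lollipop_label lt_ul; apply: lollipop_dist.
rewrite eq_label; apply: (dist_is_sym lollipop_simple.1).
by rewrite /lollipop_label lt_vl; apply: lollipop_dist.
Qed.

Lemma lollipop_label_range k : (exists x, lollipop_label x = k) <-> 1 <= k <= l.
Proof.
split=> [[x <-]|k_range].
  by have := ltn_ord x; rewrite /lollipop_label; case: ifP; lia.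
have lt_k1 : k.-1 < 2 * l by lia.
by exists (Ordinal lt_k1); rewrite /lollipop_label /=; case: ifP; lia.
Qed.

Lemma card_lollipop_label k :
  1 <= k <= l -> #|[set x | lollipop_label x == k]| = 2.
Proof.
move=> k_range.
have lt_k1 : k.-1 < 2 * l by lia.
have lt_lk1 : l + k.-1 < 2 * l by lia.
rewrite (_ : [set x | _] = [set Ordinal lt_k1; Ordinal lt_lk1]).
  by rewrite cards2 -val_eqE /=; case: eqP; lia.
apply/setP=> x; rewrite !inE -!val_eqE /lollipop_label /=.
by have := ltn_ord x; case: ifP; lia.
Qed.

Lemma lollipop_label_regular :
  regular_distance_labeling lollipop l 2 lollipop_label.
Proof.
split; last exact: card_lollipop_label.
split; last exact: lollipop_label_dist.
by right; apply: lollipop_label_range.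
Qed.

End Lollipop.

Theorem mainTheorem6 (l : nat) (hl : 0 < l) :
  exists e : rel 'I_(2 * l),
    [/\ simple_graph e,
        graph_size e = (l + 2) * (l + 1) %/ 2 - 2
      & exists f : 'I_(2 * l) -> nat, regular_distance_labeling e l 2 f].
Proof.
exists (@lollipop l); split.
- exact: lollipop_simple.
- by rewrite lollipop_size // addn2 addn1 divn2 -bin2 (binS l.+1 1) bin1; lia.
- by exists (@lollipop_label l); exact: lollipop_label_regular.
Qed.
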